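(* Let $D$ be a Dedekind domain with field of fractions $K$ and let $A$ be a $D$-algebra with standard assumptions. Let $P$ be a nonzero prime ideal of $D$. Then the following are equivalent: (1) $N_{D/P}(A/PA)\neq (0)$; (2) $D_P[X]\subsetneq \textnormal{Int}_K(A_P)$; (3) $D/P$ is finite and $A/PA$ is an algebraic $D/P$-algebra of bounded degree.
   Context: A $D$-algebra $A$ satisfies the standard assumptions if it is torsion-free as a $D$-module and $A\cap K = D$ inside $K\otimes_D A$; polynomials in $K[X]$ are evaluated in $K\otimes_D A$. $A_P=(D\setminus P)^{-1}A$ and $\textnormal{Int}_K(A_P)=\{f\in K[X]\mid f(A_P)\subseteq A_P\}$. For a commutative ring $R$ and $R$-algebra $C$, $N_R(C)=\{f\in R[X]\mid f(c)=0\ \forall c\in C\}$. An algebra over a field $F$ is algebraic of bounded degree if there is $n$ such that every element satisfies a nonzero polynomial over $F$ of degree at most $n$. *)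

From HB Require Import structures.
From mathcomp Require Import all_boot all_order all_algebra.
From mathcomp Require Import fraction.
Set Implicit Arguments. Unset Strict Implicit. Unset Printing Implicit Defensive.
Import Order.TTheory GRing.Theory Num.Theory.
Local Open Scope ring_scope.
Local Notation "x %:F" := (@tofrac _ x).


Section Ideals.
Variable D : idomainType.

Definition is_ideal (I : D -> Prop) : Prop :=
  [/\ I 0, (forall x y, I x -> I y -> I (x + y)) & (forall r x, I x -> I (r * x))].

Definition is_prime_ideal (P : D -> Prop) : Prop :=
  [/\ is_ideal P, ~ P 1 & (forall a b, P (a * b) -> P a \/ P b)].

Definition nonzero_ideal (I : D -> Prop) : Prop := exists x, I x /\ x <> 0.

Definition noetherian_dom : Prop :=
  forall I, is_ideal I -> exists s : seq D,
    (forall x, x \in s -> I x) /\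
    (forall x, I x -> exists c : seq D, size c = size s /\
                     x = \sum_(i < size s) c`_i * s`_i).

Definition integrally_closed_dom : Prop :=
  forall x : {fraction D},
    (exists p : {poly D}, p \is monic /\ root (map_poly (@tofrac D) p) x) ->
    exists d : D, x = d%:F.

Definition dim_le1 : Prop :=
  forall P, is_prime_ideal P -> nonzero_ideal P ->
  forall I, is_ideal I -> ~ I 1 -> (forall x, P x -> I x) -> forall x, I x -> P x.

Definition dedekind_domain : Prop :=
  [/\ noetherian_dom, integrally_closed_dom & dim_le1].
End Ideals.

Section Algebra.
Variable D : idomainType.
Local Notation K := {fraction D}.
Variable B : algType K.

Definition evalK (f : {poly K}) (b : B) : B := (map_poly (in_alg B) f).[b].
Definition evalD (f : {poly D}) (b : B) : B := evalK (map_poly (@tofrac D) f) b.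

(* A is (the image of) a D-algebra A inside B such that B = K (x)_D A:
   A is a unital subring of B, stable under the D-action, and every
   element of B is of the form d^-1 a (d in D nonzero, a in A).  With
   this, A is torsion-free and B is canonically K (x)_D A.  The last
   condition is the standard assumption A ∩ K = D. *)
Definition standard_assumptions (A : B -> Prop) : Prop :=
  [/\ A 1 /\ (forall x y, A x -> A y -> A (x - y)),
      (forall x y, A x -> A y -> A (x * y)),
      (forall (d : D) x, A x -> A (d%:F *: x)),
      (forall b : B, exists d : D, exists2 a, A a & d != 0 /\ b = (d%:F)^-1 *: a)
    & (forall k : K, A (k%:A) -> exists d : D, k = d%:F)].

Definition locD (P : D -> Prop) (k : K) : Prop :=
  exists d s : D, ~ P s /\ k = d%:F / s%:F.

Definition locA (P : D -> Prop) (A : B -> Prop) (b : B) : Prop :=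
  exists a s, [/\ A a, ~ P s & b = (s%:F)^-1 *: a].

Definition IntK (P : D -> Prop) (A : B -> Prop) (f : {poly K}) : Prop :=
  forall b, locA P A b -> locA P A (evalK f b).

Definition polyOverLoc (P : D -> Prop) (f : {poly K}) : Prop :=
  forall i, locD P f`_i.

Definition PA (P : D -> Prop) (A : B -> Prop) (b : B) : Prop :=
  exists s : seq (D * B), (forall x, x \in s -> P x.1 /\ A x.2) /\
    b = \sum_(x <- s) (x.1)%:F *: x.2.

Definition nonzero_mod (P : D -> Prop) (f : {poly D}) : Prop :=
  exists i, ~ P f`_i.

Definition N_nonzero (P : D -> Prop) (A : B -> Prop) : Prop :=
  exists f : {poly D}, nonzero_mod P f /\
    forall a, A a -> PA P A (evalD f a).

Definition finite_quotient (P : D -> Prop) : Prop :=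
  exists s : seq D, forall d, exists2 x, x \in s & P (d - x).

Definition bounded_degree_mod (P : D -> Prop) (A : B -> Prop) : Prop :=
  exists n : nat, forall a, A a -> exists f : {poly D},
    [/\ nonzero_mod P f, (size f <= n.+1)%N & PA P A (evalD f a)].
End Algebra.

(* Since D is Dedekind, D_P is a discrete valuation ring: some pi in P satisfies
   P D_P = pi D_P (an element q of P^-1 outside D_P exists by Noetherianity and
   dim D <= 1, and the determinant trick shows that q p is a unit of D_P for some
   p in P), and every nonzero d in D divides a power of pi in D_P.
   (1) -> (2): if f in D[X] is nonzero mod P and f(A) is in PA, then f / pi maps
   A_P into A_P but does not lie in D_P[X].
   (2) -> (1): for g in Int_K(A_P) outside D_P[X], multiply g by the least power
   of pi bringing it into D_P[X] and clear the remaining D_P-unit denominators.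
   (1) -> (3): for d in D, f(d) lies in PA, and PA meets D in P, so f mod P is a
   nonzero polynomial vanishing on D/P; hence D/P is finite, and f bounds the
   degree of A/PA.
   (3) -> (1): the product of lifts of all nonzero polynomials of degree at most
   n over D/P annihilates A/PA. *)

From HB Require Import structures.
From mathcomp Require Import all_boot all_order all_algebra.
From mathcomp Require Import fraction.
From mathcomp Require Import ring zify.
From Stdlib Require Import Classical ClassicalEpsilon.
Set Implicit Arguments. Unset Strict Implicit. Unset Printing Implicit Defensive.
Import GRing.Theory.
Local Open Scope ring_scope.
Local Notation "x %:F" := (@tofrac _ x).

Lemma nat_transition (Q : nat -> Prop) n : Q n -> Q 0%N \/ exists m, Q m.+1 /\ ~ Q m.
Proof.
elim: n => [|n IH] Qn; first by left.
by case: (classic (Q n)) => [/IH //|nQn]; right; exists n.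
Qed.

Lemma exists_filter (T : eqType) (Q : T -> Prop) (s : seq T) :
  exists r : seq T, (forall x, x \in r -> Q x) /\ (forall x, x \in s -> Q x -> x \in r).
Proof.
elim: s => [|y s [r [rQ sr]]]; first by exists [::].
case: (classic (Q y)) => Qy; last first.
  by exists r; split => // x; rewrite inE => /predU1P [->|/sr].
exists (y :: r); split => x; rewrite !inE.
  by case/predU1P => [->|/rQ].
by case/predU1P => [-> _|xs Qx]; rewrite ?eqxx // sr ?orbT.
Qed.

Section Ideals.
Variables (D : idomainType) (I : D -> Prop).
Hypothesis idealI : is_ideal I.

Lemma ideal0 : I 0. Proof. by case: idealI. Qed.
Lemma idealD x y : I x -> I y -> I (x + y). Proof. by case: idealI => _ + _; apply. Qed.
Lemma idealMl r x : I x -> I (r * x). Proof. by case: idealI => _ _; apply. Qed.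
Lemma idealMr r x : I x -> I (x * r). Proof. by rewrite mulrC; apply: idealMl. Qed.
Lemma idealN x : I x -> I (- x). Proof. by rewrite -mulN1r; apply: idealMl. Qed.
Lemma idealB x y : I x -> I y -> I (x - y). Proof. by move=> Ix /idealN; apply: idealD. Qed.

Lemma ideal_sum (J : Type) (r : seq J) (F : J -> D) :
  (forall j, I (F j)) -> I (\sum_(j <- r) F j).
Proof. by move=> IF; elim/big_rec: _ => [|j x _]; [exact: ideal0|exact: idealD]. Qed.

Lemma ideal_lincomb (s c : seq D) :
  (forall x, x \in s -> I x) -> I (\sum_(i < size s) c`_i * s`_i).
Proof. by move=> sI; apply: ideal_sum => i; apply/idealMl/sI/mem_nth. Qed.
End Ideals.

Section Noetherian.
Variable D : idomainType.
Hypothesis noethD : noetherian_dom D.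

Lemma noetherian_chain_stationary (c : nat -> D -> Prop) :
  (forall n, is_ideal (c n)) -> (forall n x, c n x -> c n.+1 x) ->
  exists N, forall n x, c n x -> c N x.
Proof.
move=> idc cS.
have mono m n : (m <= n)%N -> forall x, c m x -> c n x.
  by move/subnK <-; elim: (n - m)%N => // k IH x /IH /cS.
pose U x := exists n, c n x.
have idU : is_ideal U.
  split; first by exists 0%N; exact: ideal0.
  - move=> x y [m cx] [n cy]; exists (maxn m n); apply: idealD => //.
      exact: mono (leq_maxl m n) _ cx.
    exact: mono (leq_maxr m n) _ cy.
  - by move=> r x [n cx]; exists n; exact: idealMl.
have [s [sU genU]] := noethD idU.
have [N sN] : exists N, forall x, x \in s -> c N x.
  elim: s sU {genU} => [|y s IH] sU; first by exists 0%N.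
  have [N1 sN1] : exists N, forall x, x \in s -> c N x.
    by apply: IH => x xs; apply: sU; rewrite inE xs orbT.
  have [N2 yN2] := sU y (mem_head y s).
  exists (maxn N1 N2) => x; rewrite inE => /predU1P [->|/sN1].
    exact: mono (leq_maxr N1 N2) _ yN2.
  exact: mono (leq_maxl N1 N2) _.
exists N => n x cx; have [cs [_ ->]] := genU x (ex_intro _ n cx).
exact: ideal_lincomb.
Qed.

Lemma noetherian_maximal (F : (D -> Prop) -> Prop) :
  (forall I, F I -> is_ideal I) -> (exists I, F I) ->
  exists M, F M /\ forall J, F J -> (forall x, M x -> J x) -> forall x, J x -> M x.
Proof.
move=> idF [I0 FI0]; apply: NNPP => noMax.
have grow (S : {I | F I}) : exists T : {I | F I},
    (forall x, sval S x -> sval T x) /\ exists x, sval T x /\ ~ sval S x.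
  apply: NNPP => noT; apply: noMax; exists (sval S); split; first exact: svalP.
  move=> J FJ SJ x Jx; apply: NNPP => nSx; apply: noT.
  by exists (exist _ J FJ); split => //; exists x.
have [next nextP] := choice _ grow.
pose c n := sval (iter n next (exist _ I0 FI0)).
have [N cN] := @noetherian_chain_stationary c (fun n => idF _ (svalP _))
  (fun n => proj1 (nextP _)).
have [_ [x [cx ncx]]] := nextP (iter N next (exist _ I0 FI0)).
exact: ncx (cN N.+1 x cx).
Qed.
End Noetherian.

Section CommonDenominator.
Variables (D : idomainType) (S : D -> Prop).
Hypotheses (S1 : S 1) (SM : forall s t, S s -> S t -> S (s * t)).

Definition inD (k : {fraction D}) := exists d : D, k = d%:F.

Lemma common_denominator (J : eqType) (r : seq J) (F : J -> {fraction D}) :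
  (forall j, j \in r -> exists2 s, S s & inD (s%:F * F j)) ->
  exists2 T, S T & forall j, j \in r -> inD (T%:F * F j).
Proof.
elim: r => [|j r IH] den; first by exists 1.
have [T ST rT] : exists2 T, S T & forall i, i \in r -> inD (T%:F * F i).
  by apply: IH => i ir; apply: den; rewrite inE ir orbT.
have [s Ss [d sd]] := den j (mem_head j r).
exists (T * s) => [|i]; first exact: SM.
rewrite inE => /predU1P [->|ir].
  by exists (T * d); rewrite tofracM -mulrA sd tofracM.
have [e Te] := rT i ir; exists (e * s).
by rewrite tofracM mulrAC Te tofracM.
Qed.
End CommonDenominator.

Lemma eigenvalue_integral (D : idomainType) m (G : 'M[D]_m)
    (w : 'rV[{fraction D}]_m) (x : {fraction D}) :
  integrally_closed_dom D -> w != 0 -> w *m map_mx (@tofrac D) G = x *: w -> inD x.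
Proof.
move=> intcl w0 wG.
have : eigenvalue (map_mx (@tofrac D) G) x by apply/eigenvalueP; exists w.
rewrite eigenvalue_root_char -map_char_poly => rootx.
exact: intcl x (ex_intro _ _ (conj (char_poly_monic G) rootx)).
Qed.

Section StandardAlgebra.
Variable D : idomainType.
Local Notation K := {fraction D}.
Variables (B : algType K) (A : B -> Prop).

Lemma evalK_wide (f : {poly K}) (b : B) n : (size f <= n)%N ->
  evalK f b = \sum_(i < n) f`_i *: b ^+ i.
Proof.
move=> szf; rewrite /evalK (@horner_coef_wide _ n); last exact: leq_trans (size_poly _ _) szf.
by apply: eq_bigr => i _; rewrite coef_map /= mulr_algl.
Qed.

Lemma evalD_sum (f : {poly D}) (b : B) :
  evalD f b = \sum_(i < size f) (f`_i)%:F *: b ^+ i.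
Proof.
rewrite /evalD (@evalK_wide _ _ (size f)) ?size_poly //.
by apply: eq_bigr => i _; rewrite coef_map.
Qed.

Lemma evalKZ k (f : {poly K}) (b : B) : evalK (k *: f) b = k *: evalK f b.
Proof. by rewrite /evalK map_polyZ /= hornerZ mulr_algl. Qed.

Lemma evalDB (f g : {poly D}) (b : B) : evalD (f - g) b = evalD f b - evalD g b.
Proof. by rewrite /evalD raddfB; exact: (raddfB (horner_alg b)). Qed.

Lemma evalD_prod (r : seq {poly D}) (b : B) :
  evalD (\prod_(h <- r) h) b = \prod_(h <- r) evalD h b.
Proof. by rewrite /evalD rmorph_prod; exact: (rmorph_prod (horner_alg b)). Qed.

Lemma evalD_alg (f : {poly D}) (d : D) : evalD f ((d%:F)%:A : B) = (f.[d])%:F%:A.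
Proof. by rewrite /evalD /evalK horner_map /= horner_map. Qed.

Hypothesis stdA : standard_assumptions A.

Lemma stdA1 : A 1. Proof. by case: stdA => [[]]. Qed.
Lemma stdAB x y : A x -> A y -> A (x - y).
Proof. by case: stdA => [[_ AB]] _ _ _ _; apply: AB. Qed.
Lemma stdA0 : A 0. Proof. by rewrite -(subrr 1); apply: stdAB; exact: stdA1. Qed.
Lemma stdAN x : A x -> A (- x).
Proof. by move=> Ax; rewrite -sub0r; apply: stdAB => //; exact: stdA0. Qed.
Lemma stdAD x y : A x -> A y -> A (x + y).
Proof. by move=> Ax Ay; rewrite -[y]opprK; apply: stdAB => //; exact: stdAN. Qed.
Lemma stdAM x y : A x -> A y -> A (x * y). Proof. by case: stdA => _ AM _ _ _; apply: AM. Qed.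
Lemma stdAZ (d : D) x : A x -> A (d%:F *: x). Proof. by case: stdA => _ _ AZ _ _; apply: AZ. Qed.

Lemma stdAX x n : A x -> A (x ^+ n).
Proof.
by move=> Ax; elim: n => [|n IH]; [rewrite expr0; exact: stdA1|rewrite exprS; exact: stdAM].
Qed.

Lemma stdA_sum (J : Type) (r : seq J) (F : J -> B) :
  (forall j, A (F j)) -> A (\sum_(j <- r) F j).
Proof. by move=> AF; elim/big_rec: _ => [|j x _]; [exact: stdA0|exact: stdAD]. Qed.

Lemma stdA_evalD (f : {poly D}) a : A a -> A (evalD f a).
Proof. by move=> Aa; rewrite evalD_sum; apply: stdA_sum => i; apply/stdAZ/stdAX. Qed.

Lemma stdA_scalar (k : K) : A k%:A -> inD k. Proof. by case: stdA => _ _ _ _; apply. Qed.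

Lemma frac_denominator (k : K) : exists2 d : D, d != 0 & inD (d%:F * k).
Proof.
case: stdA => _ _ _ /(_ k%:A) [d [a Aa [d0 ka]]] _; exists d => //.
by apply: stdA_scalar; rewrite -scalerA ka scalerA mulfV ?scale1r // tofrac_eq0.
Qed.
End StandardAlgebra.

Section PrimeIdeal.
Variable D : idomainType.
Local Notation K := {fraction D}.
Variable P : D -> Prop.
Hypothesis primeP : is_prime_ideal P.

Lemma prime_ideal_is_ideal : is_ideal P. Proof. by case: primeP. Qed.
Let idealP := prime_ideal_is_ideal.

Lemma prime_ideal_not1 : ~ P 1. Proof. by case: primeP. Qed.

Lemma prime_idealM a b : P (a * b) -> P a \/ P b.
Proof. by case: primeP => _ _; apply. Qed.

Lemma notin_primeM s t : ~ P s -> ~ P t -> ~ P (s * t).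
Proof. by move=> Ps Pt /prime_idealM []. Qed.

Lemma notin_prime_tofrac s : ~ P s -> s%:F != 0.
Proof.
by move=> Ps; rewrite tofrac_eq0; apply/eqP => s0; apply: Ps; rewrite s0; exact: (ideal0 idealP).
Qed.

Lemma locD_tofrac d : locD P d%:F.
Proof. by exists d, 1; rewrite tofrac1 divr1; split => //; exact: prime_ideal_not1. Qed.

Lemma locD0 : locD P 0. Proof. by rewrite -tofrac0; exact: locD_tofrac. Qed.
Lemma locD1 : locD P 1. Proof. by rewrite -tofrac1; exact: locD_tofrac. Qed.

Lemma locDV s : ~ P s -> locD P (s%:F)^-1.
Proof. by move=> Ps; exists 1, s; rewrite tofrac1 div1r. Qed.

Lemma locDM x y : locD P x -> locD P y -> locD P (x * y).
Proof.
move=> [a [s [Ps ->]]] [b [t [Pt ->]]]; exists (a * b), (s * t).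
by split; [exact: notin_primeM|rewrite !tofracM invfM mulrACA].
Qed.

Lemma locDD x y : locD P x -> locD P y -> locD P (x + y).
Proof.
move=> [a [s [Ps ->]]] [b [t [Pt ->]]]; exists (a * t + b * s), (s * t).
split; first exact: notin_primeM.
by rewrite addf_div ?notin_prime_tofrac // tofracD !tofracM.
Qed.

Lemma locDP x : locD P x <-> exists2 s, ~ P s & inD (s%:F * x).
Proof.
split=> [[a [s [Ps ->]]]|[s Ps [d sx]]].
  by exists s => //; exists a; rewrite mulrC divfK ?notin_prime_tofrac.
by exists d, s; split => //; rewrite -sx mulrAC mulfV ?mul1r ?notin_prime_tofrac.
Qed.

Lemma locD_common_den (J : eqType) (r : seq J) (F : J -> K) :
  (forall j, j \in r -> locD P (F j)) ->
  exists2 T, ~ P T & forall j, j \in r -> inD (T%:F * F j).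
Proof.
move=> LF; apply: common_denominator => [||j /LF /locDP //].
  exact: prime_ideal_not1.
exact: notin_primeM.
Qed.

Lemma polyOverLoc_common_den (h : {poly K}) : polyOverLoc P h ->
  exists2 s, ~ P s & exists f : {poly D}, map_poly (@tofrac D) f = s%:F *: h.
Proof.
move=> Lh; have [s Ps sh] := @locD_common_den _ (iota 0 (size h)) (fun i => h`_i) (fun i _ => Lh i).
have shi i : inD (s%:F * h`_i).
  case: (ltnP i (size h)) => [ih|hi]; first by apply: sh; rewrite mem_iota.
  by exists 0; rewrite nth_default // mulr0 tofrac0.
have [c cP] := choice _ shi.
exists s => //; exists (\poly_(i < size h) c i); apply/polyP => i.
rewrite coef_map /= coef_poly coefZ; case: ltnP => [_|hi]; first by rewrite cP.
by rewrite tofrac0 nth_default ?mulr0.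
Qed.

Lemma notin_locD_inv a : P a -> a != 0 -> ~ locD P (a%:F)^-1.
Proof.
move=> Pa a0 /locDP [s Ps [d sa]]; apply: Ps.
have -> : s = d * a by apply/eqP; rewrite -tofrac_eq tofracM -sa mulfVK ?tofrac_eq0.
exact: (idealMl idealP).
Qed.

(* [P D_P = pi D_P]: [pi] generates the maximal ideal of [D_P]. *)
Definition uniformizer (pi : D) :=
  ~ locD P (pi%:F)^-1 /\ forall p, P p -> locD P (p%:F / pi%:F).

Lemma uniformizer_in pi : uniformizer pi -> P pi.
Proof. by move=> [npi _]; apply: NNPP => /locDV. Qed.

Lemma uniformizer_neq0 pi : uniformizer pi -> pi%:F != 0.
Proof. by move=> [npi _]; apply/eqP => pi0; apply: npi; rewrite pi0 invr0; exact: locD0. Qed.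

Lemma nonzero_mod_top (f : {poly D}) : nonzero_mod P f ->
  exists i, ~ P f`_i /\ forall k, (i < k)%N -> P f`_k.
Proof.
move=> [j Pfj]; pose Q m := forall k, (m <= k)%N -> P f`_k.
have Qsize : Q (size f) by move=> k /(nth_default 0) ->; exact: (ideal0 idealP).
case: (nat_transition Qsize) => [/(_ j (leq0n j)) //|[i [Qi nQi]]].
exists i; split => // Pfi; apply: nQi => k; rewrite leq_eqVlt => /predU1P [<- //|].
exact: Qi.
Qed.

Lemma nonzero_modM (f g : {poly D}) :
  nonzero_mod P f -> nonzero_mod P g -> nonzero_mod P (f * g).
Proof.
move=> /nonzero_mod_top [i [Pfi fi]] /nonzero_mod_top [j [Pgj gj]].
exists (i + j)%N; rewrite coefM.
have ltis : (i < (i + j).+1)%N by rewrite ltnS leq_addr.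
rewrite (bigD1 (Ordinal ltis)) //= addKn => Psum.
have Prest : P (\sum_(k < (i + j).+1 | k != Ordinal ltis) f`_k * g`_(i + j - k)).
  rewrite big_mkcond; apply: (ideal_sum idealP) => k.
  case: ifP => [kneq|_]; last exact: (ideal0 idealP).
  have : (k : nat) != i by exact: kneq.
  rewrite neq_ltn => /orP [ltki|ltik].
    by apply/(idealMl idealP)/gj; lia.
  exact/(idealMr idealP)/fi.
by have := idealB idealP Psum Prest; rewrite addrK => /prime_idealM [].
Qed.

Lemma nonzero_mod_prod (r : seq {poly D}) :
  (forall h, h \in r -> nonzero_mod P h) -> nonzero_mod P (\prod_(h <- r) h).
Proof.
elim: r => [|h r IH] nzr; rewrite ?big_nil ?big_cons.
  by exists 0%N; rewrite coef1 eqxx; exact: prime_ideal_not1.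
apply: nonzero_modM; first by apply: nzr; exact: mem_head.
by apply: IH => x xr; apply: nzr; rewrite inE xr orbT.
Qed.

Lemma nonzero_mod_factor (f : {poly D}) d0 : nonzero_mod P f -> P f.[d0] ->
  exists q : {poly D}, [/\ nonzero_mod P q, (size q < size f)%N &
    forall d, P f.[d] -> P q.[d] \/ P (d - d0)].
Proof.
move=> nzf Pc; set c := f.[d0] in Pc.
have /factor_theorem [q fc] : root (f - c%:P) d0.
  by rewrite rootE hornerD hornerN hornerC subrr.
have ef : f = q * ('X - d0%:P) + c%:P by rewrite -fc subrK.
have nzq : nonzero_mod P q.
  apply: NNPP => Pq; case: nzf => i; apply.
  have Pqk k : P q`_k by apply: NNPP => Pqk; apply: Pq; exists k.
  rewrite ef coefD mulrBr coefB coefMX coefMC coefC.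
  apply: (idealD idealP); last by case: (i == 0)%N => //; exact: (ideal0 idealP).
  apply: (idealB idealP); last exact: (idealMr idealP).
  by case: (i == 0)%N => //; exact: (ideal0 idealP).
have nz0 (g : {poly D}) : nonzero_mod P g -> g != 0.
  by move=> [i]; apply: contra_not_neq => ->; rewrite coef0; exact: (ideal0 idealP).
exists q; split => //.
- have szqX : size (q * ('X - d0%:P)) = (size q).+1.
    by rewrite size_Mmonic ?monicXsubC ?nz0 // size_XsubC addn2.
  have := size_polyD f (- c%:P); rewrite size_polyN fc szqX.
  have := size_polyC_leq1 c; have : (0 < size f)%N by rewrite size_poly_gt0 nz0.
  move: (size f) (size q) (size c%:P) => a b e; lia.
- move=> d Pfd; apply: prime_idealM.
  by move: (idealB idealP Pfd Pc); rewrite {1}ef hornerD hornerC hornerM hornerXsubC addrK.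
Qed.

Lemma finite_quotient_of_roots (f : {poly D}) (S : seq D) : nonzero_mod P f ->
  (forall d, (exists2 x, x \in S & P (d - x)) \/ P f.[d]) -> finite_quotient P.
Proof.
move: {2}(size f) (leqnn (size f)) => n; elim: n f S => [|n IH] f S szf nzf roots.
  move: szf; rewrite size_poly_leq0 => /eqP f0; case: nzf => i; rewrite f0 coef0.
  by move=> /(_ (ideal0 idealP)).
case: (classic (forall d, exists2 x, x \in S & P (d - x))) => [|/not_all_ex_not [d0 nd0]].
  by exists S.
have Pfd0 : P f.[d0] by case: (roots d0).
have [q [nzq szq rootq]] := nonzero_mod_factor nzf Pfd0.
apply: (IH q (d0 :: S)) => //; first by rewrite -ltnS (leq_trans szq).
move=> d; case: (roots d) => [[x xS Pdx]|/rootq [Pqd|Pdd0]]; [left|by right|left].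
  by exists x; rewrite // inE xS orbT.
by exists d0; rewrite ?mem_head.
Qed.

Fixpoint all_words (s : seq D) k : seq (seq D) :=
  if k is k'.+1 then [seq x :: w | x <- s, w <- all_words s k'] else [:: [::]].

Lemma finite_quotient_polys : finite_quotient P -> forall n,
  exists L : seq {poly D}, forall f : {poly D}, (size f <= n)%N ->
    exists2 h, h \in L & forall i, P (f - h)`_i.
Proof.
move=> [s reps] n; exists [seq Poly w | w <- all_words s n] => f szf.
have approx k (u : nat -> D) : exists w,
    [/\ w \in all_words s k, size w = k & forall i, (i < k)%N -> P (u i - w`_i)].
  elim: k u => [|k IH] u; first by exists [::]; split; rewrite ?inE.
  have [x xs Pux] := reps (u 0%N).
  have [w [wk szw Pw]] := IH (fun i => u i.+1).
  exists (x :: w); split => /=; first exact: (allpairs_f (fun x w => x :: w) xs wk).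
    by rewrite szw.
  by case=> [_|i /Pw].
have [w [wn szw Pw]] := approx n (fun i => f`_i).
exists (Poly w); first exact: map_f.
move=> i; rewrite coefB coef_Poly; case: (ltnP i n) => [/Pw //|ni].
rewrite !nth_default ?subrr ?szw //; first exact: (ideal0 idealP).
exact: leq_trans szf ni.
Qed.

Definition colon (q : K) (y : D) := locD P (y%:F * q).

Lemma colon_ideal q : is_ideal (colon q).
Proof.
split; rewrite /colon.
- by rewrite tofrac0 mul0r; exact: locD0.
- by move=> x y Lx Ly; rewrite tofracD mulrDl; exact: locDD.
- by move=> r x Lx; rewrite tofracM -mulrA; exact: locDM (locD_tofrac r) Lx.
Qed.

Section Dedekind.
Hypotheses (nzP : nonzero_ideal P) (dimD : dim_le1 D) (noethD : noetherian_dom D).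

Lemma invertible_mod_prime t : ~ P t -> exists t' p, P p /\ 1 = p + t * t'.
Proof.
move=> Pt; apply: NNPP => noinv.
pose I y := exists p r, P p /\ y = p + t * r.
have idealI : is_ideal I.
  split; first by exists 0, 0; rewrite mulr0 addr0; split => //; exact: (ideal0 idealP).
  - move=> x y [p [r [Pp ->]]] [p' [r' [Pp' ->]]]; exists (p + p'), (r + r').
    by split; [exact: (idealD idealP)|rewrite mulrDr addrACA].
  - move=> c x [p [r [Pp ->]]]; exists (c * p), (c * r).
    by split; [exact: (idealMl idealP)|rewrite mulrDr mulrCA].
have nI1 : ~ I 1 by move=> [p [r [Pp e]]]; apply: noinv; exists r, p.
have PI x : P x -> I x by exists x, 0; rewrite mulr0 addr0.
apply: Pt; apply: (dimD primeP nzP idealI nI1 PI).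
by exists 0, 1; rewrite mulr1 add0r; split => //; exact: (ideal0 idealP).
Qed.

Lemma exists_inv_prime : exists2 q : K, ~ locD P q & forall p, P p -> colon q p.
Proof.
have [a [Pa a0]] := nzP.
pose F I := exists q, [/\ ~ locD P q, locD P (a%:F * q) & I = colon q].
have idF I : F I -> is_ideal I by move=> [q [_ _ ->]]; exact: colon_ideal.
have F1 : exists I, F I.
  exists (colon (a%:F)^-1), (a%:F)^-1; split => //.
    by apply: notin_locD_inv => //; apply/eqP.
  by rewrite mulfV ?tofrac_eq0; [exact: locD1 | apply/eqP].
have [_ [[q [nq aq ->]] maxq]] := noetherian_maximal noethD idF F1.
have colonP y : colon q y -> P y.
  move=> Ly; apply: NNPP => Py; apply: nq.
  by rewrite -[q](mulKf (notin_prime_tofrac Py)); exact: locDM (locDV Py) Ly.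
have prime_colon : is_prime_ideal (colon q).
  split; first exact: colon_ideal.
  - by rewrite /colon tofrac1 mul1r.
  - move=> x y Lxy; case: (classic (colon q x)) => [|nLx]; [by left|right].
    have Fxq : F (colon (x%:F * q)).
      exists (x%:F * q); split => //; rewrite mulrCA; exact: locDM (locD_tofrac x) aq.
    apply: (maxq _ Fxq) => [z Lz|]; rewrite /colon.
      by rewrite mulrCA; exact: locDM (locD_tofrac x) Lz.
    by move: Lxy; rewrite /colon tofracM mulrA (mulrC y%:F).
have nz_colon : nonzero_ideal (colon q) by exists a.
by exists q => // p; apply: (dimD prime_colon nz_colon idealP prime_ideal_not1).
Qed.

Lemma locD_of_mul_prime_stable (q : K) : integrally_closed_dom D ->
  (forall p, P p -> exists d t, [/\ P d, ~ P t & p%:F * q = d%:F / t%:F]) -> locD P q.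
Proof.
move=> intcl qP; have [s [sP gen]] := noethD idealP; pose m := size s.
have row (i : 'I_m) : exists ct : seq D * D, ~ P ct.2 /\
    (s`_i)%:F * q = (\sum_(j < m) ct.1`_j * s`_j)%:F / ct.2%:F.
  have Psi : P s`_i by apply/sP/mem_nth.
  have [d [t [Pd Pt ->]]] := qP _ Psi; have [c [_ ->]] := gen d Pd.
  by exists (c, t).
have [ct ctP] := choice _ row.
pose k (ij : 'I_m * 'I_m) := ((ct ij.1).1`_ij.2)%:F / (ct ij.1).2%:F.
have [T PT Tk] := @locD_common_den _ (enum {: 'I_m * 'I_m}) k
  (fun ij _ => locDM (locD_tofrac _) (locDV (proj1 (ctP ij.1)))).
have [e eP] := choice _ (fun ij => Tk ij (mem_enum _ ij)).
pose w : 'rV[K]_m := \row_j (s`_j)%:F.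
have wG : w *m map_mx (@tofrac D) (\matrix_(i, j) e (j, i)) = (T%:F * q) *: w.
  apply/rowP => j; rewrite !mxE -mulrA (mulrC q) (proj2 (ctP j)) rmorph_sum /=.
  rewrite mulr_suml mulr_sumr.
  by apply: eq_bigr => i _; rewrite !mxE -eP /k /= tofracM; ring.
have w0 : w != 0.
  apply/eqP => w0; have [a [Pa a0]] := nzP; apply: a0.
  have [c [_ ->]] := gen a Pa; apply: big1 => i _.
  have : w 0 i = 0 by rewrite w0 mxE.
  by rewrite mxE => /eqP; rewrite tofrac_eq0 => /eqP ->; rewrite mulr0.
have [d Tqd] := eigenvalue_integral intcl w0 wG.
by apply/locDP; exists T => //; exists d.
Qed.

Lemma exists_uniformizer : integrally_closed_dom D -> exists pi, uniformizer pi.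
Proof.
move=> intcl; have [q nq Pq] := exists_inv_prime.
have [p [Pp nPpq]] : exists p, P p /\
    ~ exists d t, [/\ P d, ~ P t & p%:F * q = d%:F / t%:F].
  apply: NNPP => all; apply/nq/locD_of_mul_prime_stable => // p Pp.
  by apply: NNPP => npq; apply: all; exists p.
have [u [t [Pt eu]]] := Pq p Pp.
have Pu : ~ P u by move=> Pu; apply: nPpq; exists u, t.
have pq0 : p%:F * q != 0 by rewrite eu mulf_neq0 ?invr_eq0 ?notin_prime_tofrac.
have /andP [p0 q0] : (p%:F != 0) && (q != 0) by rewrite -negb_or -mulf_eq0.
exists p; split => [Lp|p' Pp'].
  by apply/nq; rewrite -[q](mulKf p0); exact: locDM Lp (Pq p Pp).
have -> : p'%:F / p%:F = (p'%:F * q) * (p%:F * q)^-1.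
  by rewrite invfM mulrACA mulfV ?mulr1.
apply: locDM (Pq p' Pp') _; rewrite eu invf_div.
exact: locDM (locD_tofrac t) (locDV Pu).
Qed.

Section Valuation.
Variables (pi d : D).
Hypotheses (piP : uniformizer pi) (d0 : d != 0).

Lemma uniformizer_pow_notin_locD : exists n, ~ locD P (d%:F / pi%:F ^+ n).
Proof.
have piF := uniformizer_neq0 piP; have dF : d%:F != 0 by rewrite tofrac_eq0.
pose c n := colon (pi%:F ^+ n / d%:F).
have [N cN] : exists N, forall n y, c n y -> c N y.
  apply: noetherian_chain_stationary => // [n|n y]; first exact: colon_ideal.
  rewrite /c /colon => cy.
  have -> : y%:F * (pi%:F ^+ n.+1 / d%:F) = pi%:F * (y%:F * (pi%:F ^+ n / d%:F)).
    by rewrite exprS; ring.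
  exact: locDM (locD_tofrac pi) cy.
exists N.+1 => /locDP [s Ps [y sy]].
have ys : y%:F * (pi%:F ^+ N.+1 / d%:F) = s%:F.
  by rewrite -sy -mulrA [X in _ * X]mulrA divfK ?expf_neq0 // divff // mulr1.
have cy : c N.+1 y by rewrite /c /colon ys; exact: locD_tofrac.
apply: piP.1; have := locDM (locDV Ps) (cN _ _ cy).
have -> : (s%:F)^-1 * (y%:F * (pi%:F ^+ N / d%:F)) = (pi%:F)^-1.
  apply: (mulfI piF); rewrite mulfV // -(mulVf (notin_prime_tofrac Ps)).
  by rewrite -[X in _ = _ * X]ys exprS; ring.
by [].
Qed.

Lemma uniformizer_pow_locD : exists n, locD P (pi%:F ^+ n / d%:F).
Proof.
have [N nN] := uniformizer_pow_notin_locD.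
case: (@nat_transition (fun n => ~ locD P (d%:F / pi%:F ^+ n)) N nN)
  => [|[k [nk1 /NNPP [y [s [Ps dk]]]]]].
  by rewrite expr0 divr1; case; exact: locD_tofrac.
have Py : ~ P y.
  move=> Py; apply: nk1; rewrite exprS invfM mulrA (mulrC d%:F) -mulrA dk.
  have -> : pi%:F^-1 * (y%:F / s%:F) = (y%:F / pi%:F) * (s%:F)^-1 by ring.
  exact: locDM (piP.2 y Py) (locDV Ps).
exists k; rewrite -invf_div dk invf_div.
exact: locDM (locD_tofrac s) (locDV Py).
Qed.
End Valuation.

Section LocalAlgebra.
Variables (B : algType K) (A : B -> Prop).
Hypothesis stdA : standard_assumptions A.

Lemma locA_of a : A a -> locA P A a.
Proof.
by move=> Aa; exists a, 1; rewrite tofrac1 invr1 scale1r; split => //; exact: prime_ideal_not1.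
Qed.

Lemma locA0 : locA P A 0. Proof. exact: locA_of (stdA0 stdA). Qed.
Lemma locA1 : locA P A 1. Proof. exact: locA_of (stdA1 stdA). Qed.

Lemma locAM x y : locA P A x -> locA P A y -> locA P A (x * y).
Proof.
move=> [a [s [Aa Ps ->]]] [b [t [Ab Pt ->]]]; exists (a * b), (s * t); split.
- exact: (stdAM stdA).
- exact: notin_primeM.
- by rewrite -scalerAl -scalerAr scalerA tofracM invfM.
Qed.

Lemma locAD x y : locA P A x -> locA P A y -> locA P A (x + y).
Proof.
move=> [a [s [Aa Ps ->]]] [b [t [Ab Pt ->]]].
exists (t%:F *: a + s%:F *: b), (s * t); split.
- by apply: (stdAD stdA); apply: (stdAZ stdA).
- exact: notin_primeM.
rewrite scalerDr !scalerA tofracM invfM.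
by rewrite -mulrA mulVf ?mulr1 ?notin_prime_tofrac // mulrAC mulVf ?mul1r ?notin_prime_tofrac.
Qed.

Lemma locAZ k x : locD P k -> locA P A x -> locA P A (k *: x).
Proof.
move=> [d [t [Pt ->]]] [a [s [Aa Ps ->]]]; exists (d%:F *: a), (t * s); split.
- exact: (stdAZ stdA).
- exact: notin_primeM.
by rewrite !scalerA tofracM invfM; congr (_ *: _); ring.
Qed.

Lemma locAX x n : locA P A x -> locA P A (x ^+ n).
Proof.
by move=> Lx; elim: n => [|n IH]; [rewrite expr0; exact: locA1|rewrite exprS; exact: locAM].
Qed.

Lemma locA_sum (J : Type) (r : seq J) (F : J -> B) :
  (forall j, locA P A (F j)) -> locA P A (\sum_(j <- r) F j).
Proof. by move=> LF; elim/big_rec: _ => [|j x _]; [exact: locA0|exact: locAD]. Qed.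

Lemma IntK_polyOverLoc (f : {poly K}) : polyOverLoc P f -> IntK P A f.
Proof.
move=> Lf b Lb; rewrite (@evalK_wide _ _ _ _ (size f)) //.
by apply: locA_sum => i; apply: locAZ; [exact: Lf|exact: locAX].
Qed.

Lemma PA0 : PA P A 0. Proof. by exists [::]; rewrite big_nil. Qed.

Lemma PAD x y : PA P A x -> PA P A y -> PA P A (x + y).
Proof.
move=> [s [sP ->]] [t [tP ->]]; exists (s ++ t); split; last by rewrite big_cat.
by move=> z; rewrite mem_cat => /orP []; [exact: sP|exact: tP].
Qed.

Lemma PA_sum (J : Type) (r : seq J) (F : J -> B) :
  (forall j, PA P A (F j)) -> PA P A (\sum_(j <- r) F j).
Proof. by move=> PF; elim/big_rec: _ => [|j x _]; [exact: PA0|exact: PAD]. Qed.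

Lemma PA_scale p a : P p -> A a -> PA P A (p%:F *: a).
Proof.
move=> Pp Aa; exists [:: (p, a)]; rewrite big_seq1; split => // z.
by rewrite inE => /eqP ->.
Qed.

Lemma PA_map (phi : B -> B) x :
  (forall p a, P p -> A a -> PA P A (phi (p%:F *: a))) -> {morph phi : u v / u + v} ->
  phi 0 = 0 -> PA P A x -> PA P A (phi x).
Proof.
move=> phiPA phiD phi0 [s [sP ->]].
rewrite (big_morph phi phiD phi0) big_seq big_mkcond /=.
by apply: PA_sum => z; case: ifP => [/sP [Pz Az]|_]; [exact: phiPA|exact: PA0].
Qed.

Lemma PAZ (d : D) x : PA P A x -> PA P A (d%:F *: x).
Proof.
apply: PA_map => [p a Pp Aa||]; [|exact: scalerDr|exact: scaler0].
by rewrite scalerA mulrC -scalerA; apply: PA_scale => //; exact: (stdAZ stdA).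
Qed.

Lemma PAMl c x : A c -> PA P A x -> PA P A (c * x).
Proof.
move=> Ac; apply: PA_map => [p a Pp Aa||]; [|exact: mulrDr|exact: mulr0].
by rewrite -scalerAr; apply: PA_scale => //; exact: (stdAM stdA).
Qed.

Lemma PAMr c x : A c -> PA P A x -> PA P A (x * c).
Proof.
move=> Ac PAx; apply: (@PA_map (fun u => u * c) x _ _ _ PAx) => [p a Pp Aa|u v|].
- by rewrite -scalerAl; apply: PA_scale => //; exact: (stdAM stdA).
- exact: mulrDl.
- exact: mul0r.
Qed.

Lemma PAB x y : PA P A x -> PA P A y -> PA P A (x - y).
Proof. by move=> PAx /(PAZ (-1)); rewrite tofracN tofrac1 scaleN1r; exact: PAD. Qed.

Lemma PA_evalD (h : {poly D}) a : (forall i, P h`_i) -> A a -> PA P A (evalD h a).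
Proof. by move=> Ph Aa; rewrite evalD_sum; apply: PA_sum => i; apply/PA_scale/(stdAX stdA). Qed.

Lemma PA_of_scale x t : A x -> ~ P t -> PA P A (t%:F *: x) -> PA P A x.
Proof.
move=> Ax Pt PAtx; have [t' [p [Pp e]]] := invertible_mod_prime Pt.
have -> : x = p%:F *: x + t'%:F *: (t%:F *: x).
  by rewrite scalerA -tofracM -scalerDl -tofracD mulrC -e tofrac1 scale1r.
by apply: PAD; [exact: PA_scale|exact: PAZ].
Qed.

Section UniformizerAlgebra.
Variable pi : D.
Hypothesis piP : uniformizer pi.

Lemma locA_PA_div x : PA P A x -> locA P A ((pi%:F)^-1 *: x).
Proof.
move=> [s [sP ->]]; rewrite scaler_sumr big_seq big_mkcond; apply: locA_sum => z.
case: ifP => [/sP [Pz Az]|_]; last exact: locA0.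
by rewrite scalerA mulrC; apply: locAZ; [exact: piP.2|exact: locA_of].
Qed.

Lemma PA_scalar e : PA P A (e%:F)%:A -> P e.
Proof.
move=> [s [sP es]]; apply: NNPP => Pe.
have [S PS Sden] := @locD_common_den _ s (fun z => z.1%:F / pi%:F)
  (fun z zs => piP.2 _ (sP z zs).1).
have : A ((S%:F / pi%:F) *: (e%:F)%:A).
  rewrite es scaler_sumr big_seq big_mkcond; apply: (stdA_sum stdA) => z.
  case: ifP => [zs|_]; last exact: (stdA0 stdA).
  have [d dz] := Sden z zs.
  rewrite scalerA (_ : S%:F / pi%:F * z.1%:F = S%:F * (z.1%:F / pi%:F)); last by ring.
  by rewrite dz; exact: (stdAZ stdA) (sP z zs).2.
rewrite scalerA => /(stdA_scalar stdA) [d Sed].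
apply: (notin_primeM PS Pe).
have -> : S * e = pi * d.
  apply/eqP; rewrite -tofrac_eq !tofracM -Sed; apply/eqP.
  by rewrite mulrA (mulrC pi%:F) divfK ?uniformizer_neq0.
exact: (idealMr idealP) (uniformizer_in piP).
Qed.

Lemma IntK_div_uniformizer (f : {poly D}) : (forall a, A a -> PA P A (evalD f a)) ->
  IntK P A ((pi%:F)^-1 *: map_poly (@tofrac D) f).
Proof.
move=> fPA b [a [s [Aa Ps eb]]].
have [t' [p [Pp e1]]] := invertible_mod_prime Ps.
pose u := s * t'.
have ub : t'%:F *: a = u%:F *: b.
  by rewrite eb scalerA /u tofracM mulrAC mulfV ?mul1r ?notin_prime_tofrac.
pose w i := \sum_(j < i) 1 ^+ (i.-1 - j) * u ^+ j.
have uw i : 1 - u ^+ i = p * w i.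
  by have := subrXX 1 u i; rewrite expr1n => ->; rewrite /w /u {1}e1 addrK.
(* [b = a / s] and [t' a = u b] with [u = 1 - p], so [f b - f (t' a)] lies in [p A_P]. *)
have fb : evalD f b = evalD f (t'%:F *: a) +
    p%:F *: \sum_(i < size f) ((f`_i * w i)%:F *: b ^+ i).
  rewrite ub !evalD_sum scaler_sumr -big_split /=; apply: eq_bigr => i _.
  rewrite exprZn !scalerA -scalerDl; congr (_ *: _).
  by rewrite -!tofracXn -!tofracM -tofracD mulrCA -uw; congr (_%:F); ring.
rewrite /evalD in fb; rewrite evalKZ fb scalerDr.
apply: locAD; first exact/locA_PA_div/fPA/(stdAZ stdA).
rewrite scalerA; apply: locAZ; first by rewrite mulrC; exact: piP.2.
apply: locA_sum => i; apply: locAZ; first exact: locD_tofrac.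
by apply: locAX; exists a, s.
Qed.

Lemma exists_IntK_not_polyOverLoc : N_nonzero P A -> exists g, IntK P A g /\ ~ polyOverLoc P g.
Proof.
move=> [f [[i0 Pfi0] fPA]]; exists ((pi%:F)^-1 *: map_poly (@tofrac D) f).
split; first exact: IntK_div_uniformizer.
move=> /(_ i0); rewrite coefZ coef_map /= => L; apply: piP.1.
by have := locDM L (locDV Pfi0); rewrite -mulrA mulfV ?mulr1 ?notin_prime_tofrac.
Qed.

Lemma uniformizer_pow_polyOverLoc (g : {poly K}) : exists n, polyOverLoc P (pi%:F ^+ n *: g).
Proof.
have [d d0 dg] := @common_denominator D (fun d => d != 0) (oner_neq0 D)
  (fun s t => @mulf_neq0 D s t) _ (iota 0 (size g)) (fun i => g`_i)
  (fun i _ => frac_denominator stdA g`_i).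
have [n Ln] := uniformizer_pow_locD piP d0.
exists n => i; rewrite coefZ.
case: (ltnP i (size g)) => [ig|gi]; last by rewrite nth_default // mulr0; exact: locD0.
have [e de] := dg i (etrans (mem_iota 0 (size g) i) ig).
have dF : d%:F != 0 by rewrite tofrac_eq0.
have -> : pi%:F ^+ n * g`_i = (pi%:F ^+ n / d%:F) * (d%:F * g`_i) by rewrite mulrA divfK.
by rewrite de; exact: locDM Ln (locD_tofrac e).
Qed.

Lemma N_nonzero_of_IntK_pow (g : {poly K}) n : IntK P A g ->
  polyOverLoc P (pi%:F ^+ n.+1 *: g) -> ~ polyOverLoc P (pi%:F ^+ n *: g) -> N_nonzero P A.
Proof.
move=> Ig Ln1 nLn; have piF := uniformizer_neq0 piP.
have [i0 Li0] : exists i, ~ locD P (pi%:F ^+ n * g`_i).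
  by apply: NNPP => all; apply: nLn => i; rewrite coefZ; apply: NNPP => L; apply: all; exists i.
have [s Ps [f ef]] := polyOverLoc_common_den Ln1.
have sF := notin_prime_tofrac Ps.
exists f; split.
  exists i0 => Pf; apply: Li0; have := locDM (piP.2 _ Pf) (locDV Ps).
  rewrite -[(f`_i0)%:F](coef_map (@tofrac D)) ef !coefZ exprS.
  rewrite (_ : _ / _ / _ = pi%:F ^+ n * g`_i0 * (pi%:F / pi%:F) * (s%:F / s%:F)).
    by rewrite !divff // !mulr1.
  by ring.
move=> a Aa; have [a' [t [Aa' Pt ga]]] := Ig a (locA_of Aa).
apply: (PA_of_scale (stdA_evalD stdA f Aa) Pt).
have tF := notin_prime_tofrac Pt.
have -> : t%:F *: evalD f a = pi%:F *: ((s * pi ^+ n)%:F *: a').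
  rewrite /evalD ef !evalKZ ga !scalerA; congr (_ *: _).
  rewrite (_ : _ * _ = pi%:F * (s * pi ^+ n)%:F * (t%:F / t%:F)); first by rewrite divff // mulr1.
  by rewrite tofracM tofracXn exprS; ring.
exact: PA_scale (uniformizer_in piP) ((stdAZ stdA) _ _ Aa').
Qed.

Lemma N_nonzero_of_IntK (g : {poly K}) : IntK P A g -> ~ polyOverLoc P g -> N_nonzero P A.
Proof.
move=> Ig nLg; have [N LN] := uniformizer_pow_polyOverLoc g.
case: (@nat_transition (fun n => polyOverLoc P (pi%:F ^+ n *: g)) N LN) => [|[n [Ln1 nLn]]].
  by rewrite expr0 scale1r.
exact: N_nonzero_of_IntK_pow Ln1 nLn.
Qed.

Lemma finite_bounded_of_N_nonzero :
  N_nonzero P A -> finite_quotient P /\ bounded_degree_mod P A.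
Proof.
move=> [f [nzf fPA]]; split.
  apply: (finite_quotient_of_roots (S := [::]) nzf) => d; right.
  by apply: PA_scalar; rewrite -evalD_alg; apply: fPA; exact: (stdAZ stdA) (stdA1 stdA).
by exists (size f) => a Aa; exists f; split; [|exact: leqnSn|exact: fPA].
Qed.
End UniformizerAlgebra.

Lemma N_nonzero_of_finite_bounded :
  finite_quotient P -> bounded_degree_mod P A -> N_nonzero P A.
Proof.
move=> finP [n bnd]; have [L Lrep] := finite_quotient_polys finP n.+1.
have [r [rnz Lr]] := exists_filter (nonzero_mod P) L.
exists (\prod_(h <- r) h); split; first exact: nonzero_mod_prod.
move=> a Aa; have [f [nzf szf fa]] := bnd a Aa.
have [h hL Pfh] := Lrep f szf.
have nzh : nonzero_mod P h.
  case: nzf => i Pfi; exists i => Phi; apply: Pfi.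
  by have := idealD idealP (Pfh i) Phi; rewrite coefB subrK.
have PAh : PA P A (evalD h a).
  by rewrite -[h](subKr f) evalDB; apply: PAB => //; exact: PA_evalD.
rewrite evalD_prod; have : h \in r by exact: Lr.
elim: r {rnz Lr} => [|x r IH] //; rewrite inE big_cons => /predU1P [<-|hr].
  apply: PAMr => //; apply: (big_ind A (stdA1 stdA) (stdAM stdA)) => y _.
  exact: stdA_evalD.
by apply: PAMl; [exact: stdA_evalD|exact: IH].
Qed.
End LocalAlgebra.
End Dedekind.
End PrimeIdeal.

Theorem mainTheorem8 (D : idomainType) (B : algType {fraction D})
  (A : B -> Prop) (P : D -> Prop) :
  dedekind_domain D ->
  standard_assumptions A ->
  is_prime_ideal P -> nonzero_ideal P ->
  (N_nonzero P A <->
     ((forall f, polyOverLoc P f -> IntK P A f) /\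
      (exists f, IntK P A f /\ ~ polyOverLoc P f))) /\
  ((forall f, polyOverLoc P f -> IntK P A f) /\
      (exists f, IntK P A f /\ ~ polyOverLoc P f) <->
     (finite_quotient P /\ bounded_degree_mod P A)).
Proof.
move=> [noethD intclD dimD] stdA primeP nzP.
have [pi piP] := exists_uniformizer primeP nzP dimD noethD intclD.
have N_IntK : N_nonzero P A <-> (forall f, polyOverLoc P f -> IntK P A f) /\
    (exists f, IntK P A f /\ ~ polyOverLoc P f).
  split=> [NA|[_ [g [Ig nLg]]]].
    split=> [f|]; first exact: (IntK_polyOverLoc primeP stdA).
    exact: (exists_IntK_not_polyOverLoc primeP nzP dimD stdA piP NA).
  exact: (N_nonzero_of_IntK primeP nzP dimD noethD stdA piP Ig nLg).
split=> //; rewrite -N_IntK; split=> [NA|[finP bndA]].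
  exact: (finite_bounded_of_N_nonzero primeP stdA piP NA).
exact: (N_nonzero_of_finite_bounded primeP stdA finP bndA).
Qed.
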